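(* Let $n\geq 0$ and $0\leq m\leq n$ be integers. Then \[ \sum_{\substack{k=0\\ k\neq m}}^{n}{n\brack k}\frac{(q/z;q)_k (z;q)_{n-k}}{1-q^{k-m}} z^k =(-1)^m q^{\binom{m+1}{2}}{n\brack m}(zq^{-m};q)_n \left(\sum_{k=0}^{n-1} \frac{zq^{k-m}}{1-zq^{k-m}}- \sum_{\substack{k=0\\ k\neq m}}^{n} \frac{q^{k-m}}{1-q^{k-m}} \right). \]
   Context: For $N\geq 0$, $(x;q)_N=(1-x)(1-xq)\cdots(1-xq^{N-1})$ (with $(x;q)_0=1$). The $q$-binomial coefficient is ${n\brack k}=\frac{(q;q)_n}{(q;q)_k(q;q)_{n-k}}$ for $0\leq k\leq n$ and $0$ otherwise. The identity is one of rational functions in $q$ and $z$. *)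

From HB Require Import structures.
From mathcomp Require Import all_boot all_order all_algebra.
Set Implicit Arguments. Unset Strict Implicit. Unset Printing Implicit Defensive.
Import Order.TTheory GRing.Theory Num.Theory.
Local Open Scope ring_scope.

Definition qpoch (R : nzRingType) (x q : R) (N : nat) : R :=
  \prod_(i < N) (1 - x * q ^+ i).

Definition qbinom (F : fieldType) (q : F) (n k : nat) : F :=
  if (k <= n)%N then qpoch q q n / (qpoch q q k * qpoch q q (n - k)) else 0.

From HB Require Import structures.
From mathcomp Require Import all_boot all_order all_algebra.
From mathcomp Require Import ring.
Import Order.TTheory GRing.Theory Num.Theory.
Local Open Scope ring_scope.

(* Put P(X) = prod_(i<n) (1 - z q^i X) and, for k <= n,
   E_k(X) = prod_(j<=n, j<>k) (1 - q^j X).  Since P has degree at most n,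
   Lagrange interpolation at the nodes q^-k gives P = sum_k c_k E_k with
   c_k = P(q^-k) / E_k(q^-k).  Differentiating at q^-m, where every E_k with
   k <> m vanishes, and comparing with the logarithmic derivative of P
   expresses sum_(k<>m) c_k / (1 - q^(k-m)) through c_m and the two sums on the
   right-hand side.  Reflecting the factors 1 - c q^-t = -c q^-t (1 - q^t / c)
   evaluates the coefficients:
     (q;q)_n c_k = [n k] (q/z;q)_k (z;q)_(n-k) z^k
                 = (-1)^k q^C(k+1,2) [n k] (z q^-k;q)_n. *)

Set Implicit Arguments.
Unset Strict Implicit.

Section LinearFactors.
Variable F : fieldType.

Definition lfactor (c : F) : {poly F} := 1 - c *: 'X.

Lemma horner_lfactor c x : (lfactor c).[x] = 1 - c * x.
Proof. by rewrite /lfactor !hornerE. Qed.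

Lemma deriv_lfactor c : (lfactor c)^`() = - c%:P.
Proof. by rewrite /lfactor derivB derivC derivZ derivX sub0r alg_polyC. Qed.

Lemma size_lfactor c : (size (lfactor c) <= 2)%N.
Proof.
rewrite /lfactor; apply: leq_trans (size_polyD _ _) _.
by rewrite geq_max size_polyN size_poly1 (leq_trans (size_scale_leq _ _)) ?size_polyX.
Qed.

Lemma size_prod_lfactor (I : finType) (P : pred I) (c : I -> F) :
  (size (\prod_(i | P i) lfactor (c i))%R <= #|P|.+1)%N.
Proof.
rewrite -sum1_card.
apply: (big_ind2 (fun (p : {poly F}) d => size p <= d.+1)%N) => [|p1 d1 p2 d2|i _].
- by rewrite size_poly1.
- move=> le_p1 le_p2; apply: leq_trans (size_polyMleq _ _) _.
  by rewrite -subn1 leq_subLR add1n -addSn -addnS leq_add.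
- exact: size_lfactor.
Qed.

Lemma deriv_prod_horner (I : Type) (r : seq I) (P : pred I) (p : I -> {poly F}) x :
    (forall i, P i -> (p i).[x] != 0) ->
  (\prod_(i <- r | P i) p i)^`().[x]
    = (\prod_(i <- r | P i) (p i).[x]) * \sum_(i <- r | P i) (p i)^`().[x] / (p i).[x].
Proof.
move=> nz_p; elim: r => [|i r IHr]; first by rewrite !big_nil derivC horner0 mul1r.
rewrite !big_cons; case: ifP => // Pi.
rewrite derivM hornerD !hornerM IHr horner_prod.
set A := \prod_(_ <- _ | _) _; set S := \sum_(_ <- _ | _) _.
by field; apply: nz_p.
Qed.

Lemma deriv_prod_lfactor_horner (I : Type) (r : seq I) (P : pred I) (c : I -> F) x :
    (forall i, P i -> 1 - c i * x != 0) ->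
  (\prod_(i <- r | P i) lfactor (c i))^`().[x]
    = (\prod_(i <- r | P i) (1 - c i * x)) * \sum_(i <- r | P i) - c i / (1 - c i * x).
Proof.
move=> nz_c; rewrite deriv_prod_horner => [|i /nz_c]; last by rewrite horner_lfactor.
congr (_ * _); apply: eq_bigr => i _; first by rewrite horner_lfactor.
by rewrite deriv_lfactor horner_lfactor hornerN hornerC.
Qed.

End LinearFactors.

Section Lagrange.
Variables (F : fieldType) (n : nat) (a x : 'I_n.+1 -> F).
Hypothesis a_x_eq1 : forall j l, (a j * x l == 1) = (j == l).

Definition lagrange_basis (k : 'I_n.+1) : {poly F} :=
  \prod_(j | j != k) lfactor (a j).

Definition lagrange_coef (p : {poly F}) (k : 'I_n.+1) : F :=
  p.[x k] / (lagrange_basis k).[x k].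

Lemma horner_lagrange_basis k t :
  (lagrange_basis k).[t] = \prod_(j | j != k) (1 - a j * t).
Proof. by rewrite horner_prod; apply: eq_bigr => j _; rewrite horner_lfactor. Qed.

Lemma lagrange_basis_root k l : l != k -> (lagrange_basis k).[x l] = 0.
Proof.
move=> neq_lk; rewrite horner_lagrange_basis (bigD1 l) //=.
by rewrite (eqP (_ : a l * x l == 1)) ?a_x_eq1 // subrr mul0r.
Qed.

Lemma lagrange_basis_node_neq0 k : (lagrange_basis k).[x k] != 0.
Proof.
rewrite horner_lagrange_basis; apply/prodf_neq0 => j neq_jk.
by rewrite subr_eq0 eq_sym a_x_eq1.
Qed.

Lemma lagrange_interpolation (p : {poly F}) : (size p <= n.+1)%N ->
  p = \sum_k lagrange_coef p k *: lagrange_basis k.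
Proof.
move=> size_p; apply/eqP; rewrite -subr_eq0; apply/eqP.
apply: (@roots_geq_poly_eq0 _ _ [seq x k | k : 'I_n.+1]).
- apply/allP => _ /mapP[l _ ->]; rewrite /root hornerD hornerN horner_sum.
  rewrite (bigD1 l) //= big1 => [|k neq_kl]; last first.
    by rewrite hornerZ lagrange_basis_root ?mulr0 // eq_sym.
  by rewrite addr0 hornerZ divfK ?subrr ?lagrange_basis_node_neq0.
- rewrite map_inj_uniq ?enum_uniq // => k l eq_x.
  by apply/eqP; rewrite -a_x_eq1 -eq_x a_x_eq1.
rewrite size_map size_enum_ord.
apply: leq_trans (size_polyD _ _) _; rewrite geq_max size_p size_polyN.
apply: (big_ind (fun q : {poly F} => size q <= n.+1)%N) => [|q1 q2|k _].
- by rewrite size_poly0.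
- by move=> le_q1 le_q2; apply: leq_trans (size_polyD _ _) _; rewrite geq_max le_q1.
apply: leq_trans (size_scale_leq _ _) _; apply: leq_trans (size_prod_lfactor _ _) _.
by rewrite ltnS cardC1 card_ord.
Qed.

Lemma deriv_lagrange_basis_node_self m :
  (lagrange_basis m)^`().[x m]
    = (lagrange_basis m).[x m] * \sum_(j | j != m) - a j / (1 - a j * x m).
Proof.
rewrite deriv_prod_lfactor_horner ?horner_lagrange_basis // => j neq_jm.
by rewrite subr_eq0 eq_sym a_x_eq1.
Qed.

Lemma deriv_lagrange_basis_node k m : k != m ->
  (lagrange_basis k)^`().[x m] = - a m * (lagrange_basis m).[x m] / (1 - a k * x m).
Proof.
move=> neq_km; have nz_k : 1 - a k * x m != 0 by rewrite subr_eq0 eq_sym a_x_eq1.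
have a_x_m : a m * x m = 1 by apply/eqP; rewrite a_x_eq1.
set R := \prod_(j | (j != k) && (j != m)) lfactor (a j).
have -> : lagrange_basis k = lfactor (a m) * R by rewrite /lagrange_basis (bigD1 m) // eq_sym.
have -> : (lagrange_basis m).[x m] = (1 - a k * x m) * R.[x m].
  rewrite horner_lagrange_basis (bigD1 k) //= /R horner_prod; congr (_ * _).
  by apply: eq_big => [j | j _]; [rewrite andbC | rewrite horner_lfactor].
rewrite derivM hornerD !hornerM deriv_lfactor horner_lfactor a_x_m subrr mul0r addr0.
by rewrite hornerN hornerC mulrCA mulrAC divff ?mul1r.
Qed.

Lemma deriv_horner_lagrange (p : {poly F}) m : (size p <= n.+1)%N ->
  p^`().[x m] = (lagrange_basis m).[x m] *
    (lagrange_coef p m * \sum_(j | j != m) - a j / (1 - a j * x m)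
     - a m * \sum_(k | k != m) lagrange_coef p k / (1 - a k * x m)).
Proof.
move=> size_p; rewrite {1}(lagrange_interpolation size_p) raddf_sum horner_sum.
rewrite (bigD1 m) //= derivZ hornerZ deriv_lagrange_basis_node_self.
rewrite mulrDr mulrCA; congr (_ + _).
rewrite mulrN mulrA mulr_sumr -sumrN; apply: eq_bigr => k neq_km.
by rewrite derivZ hornerZ deriv_lagrange_basis_node //; field; rewrite subr_eq0 eq_sym a_x_eq1.
Qed.

Lemma lagrange_partial_fraction (I : finType) (b : I -> F) m :
    (#|I| <= n)%N -> (forall i, 1 - b i * x m != 0) ->
  \sum_(k | k != m) lagrange_coef (\prod_i lfactor (b i)) k / (1 - a k * x m)
  = lagrange_coef (\prod_i lfactor (b i)) m *
      (\sum_i b i * x m / (1 - b i * x m) - \sum_(j | j != m) a j * x m / (1 - a j * x m)).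
Proof.
move=> le_In nz_b; set p := \prod_i _; set c := lagrange_coef p m.
have size_p : (size p <= n.+1)%N by apply: leq_trans (size_prod_lfactor _ _) _.
have nz_m := lagrange_basis_node_neq0 m.
have a_x_m : a m * x m = 1 by apply/eqP; rewrite a_x_eq1.
have p_x_m : p.[x m] = \prod_i (1 - b i * x m).
  by rewrite horner_prod; apply: eq_bigr => i _; rewrite horner_lfactor.
have scale_sum (J : finType) (P : pred J) (d : J -> F) :
    x m * \sum_(j | P j) - d j / (1 - d j * x m) = - \sum_(j | P j) d j * x m / (1 - d j * x m).
  by rewrite mulr_sumr -sumrN; apply: eq_bigr => j _; ring.
have := deriv_horner_lagrange m size_p.
rewrite {1}/p deriv_prod_lfactor_horner // -p_x_m.
rewrite (_ : p.[x m] = (lagrange_basis m).[x m] * c); last by rewrite mulrC divfK.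
rewrite -mulrA => /(mulfI nz_m) eq_c.
set S := \sum_(k | k != m) _.
have eq_S : a m * S = c * \sum_(j | j != m) - a j / (1 - a j * x m)
                      - c * \sum_i - b i / (1 - b i * x m).
  by rewrite eq_c -/c -/S; ring.
transitivity (x m * (a m * S)); first by rewrite mulrA [x m * _]mulrC a_x_m mul1r.
by rewrite eq_S mulrBr !(mulrCA (x m)) !scale_sum; ring.
Qed.

End Lagrange.

Section QNodes.
Variables (F : fieldType) (q : F) (n : nat).
Hypothesis nz_q : q != 0.
Hypothesis q_pow_neq1 : forall j : nat, (0 < j <= n)%N -> q ^+ j != 1.

Lemma qpow_eq1 d : (d <= n)%N -> (q ^+ d == 1) = (d == 0)%N.
Proof. by case: d => [|d] le_dn; rewrite ?eqxx // (negbTE (q_pow_neq1 _)). Qed.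

Lemma qpow_mul_qVpow_eq1 j l : (j <= n)%N -> (l <= n)%N ->
  (q ^+ j * q^-1 ^+ l == 1) = (j == l).
Proof.
move=> le_jn le_ln; have nz_pow d : q ^+ d != 0 by rewrite expf_neq0.
case: (leqP l j) => [le_lj | lt_jl].
  rewrite -(subnK le_lj) exprD -mulrA exprVn mulfV // mulr1.
  by rewrite qpow_eq1 ?(leq_trans (leq_subr _ _)) // -[LHS](eqn_add2r l) add0n.
rewrite -(subnK (ltnW lt_jl)) exprD mulrCA !exprVn mulfV // mulr1 invr_eq1.
rewrite qpow_eq1 ?(leq_trans (leq_subr _ _)) // subn_eq0 leqNgt lt_jl.
by rewrite subnK ?(ltnW lt_jl) // ltn_eqF.
Qed.

Lemma qpoch_q_neq0 j : (j <= n)%N -> qpoch q q j != 0.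
Proof.
move=> le_jn; apply/prodf_neq0 => t _; rewrite subr_eq0 eq_sym -exprS.
by apply: q_pow_neq1; rewrite ltn0Sn (leq_trans (ltn_ord t)).
Qed.

Lemma prod_sub_qVpow (c : F) k : c != 0 ->
  \prod_(t < k) (1 - c * q^-1 ^+ t.+1)
    = (- c) ^+ k * q^-1 ^+ 'C(k.+1, 2) * qpoch (q / c) q k.
Proof.
move=> nz_c.
have factor t : 1 - c * q^-1 ^+ t.+1 = - c * q^-1 ^+ t.+1 * (1 - q / c * q ^+ t).
  by rewrite exprVn exprS; field; rewrite nz_c expf_neq0.
under eq_bigr => t _ do rewrite factor.
rewrite big_split big_split /= prodrXr.
rewrite prodr_const card_ord; congr (_ * _ ^+ _ * _).
by rewrite -bin2_sum big_nat_recl // big_mkord add0n.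
Qed.

Lemma prod_qpow_node (G : F -> F) N k : (k <= N)%N ->
  \prod_(i < N) G (q ^+ i * q^-1 ^+ k)
    = \prod_(t < k) G (q^-1 ^+ t.+1) * \prod_(i < N - k) G (q ^+ i).
Proof.
move=> le_kN; rewrite -(big_mkord xpredT (fun i => G (q ^+ i * q^-1 ^+ k))).
rewrite (big_cat_nat (leq0n k) le_kN) /=; congr (_ * _).
  rewrite big_nat_rev -(big_mkord xpredT (fun t => G (q^-1 ^+ t.+1))).
  apply: eq_big_nat => i /andP[_ lt_ik].
  by rewrite add0n -{2}(subnK lt_ik) exprD mulrA -exprMn mulfV // expr1n mul1r.
rewrite -{1}(add0n k) big_addn big_mkord; apply: eq_bigr => i _.
by rewrite exprD -mulrA exprVn mulfV ?expf_neq0 // mulr1.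
Qed.

Lemma horner_qlagrange_basis_node (k : 'I_n.+1) :
  (lagrange_basis (fun j : 'I_n.+1 => q ^+ j) k).[q^-1 ^+ k]
    = (-1) ^+ k * q^-1 ^+ 'C(k.+1, 2) * (qpoch q q k * qpoch q q (n - k)).
Proof.
rewrite horner_lagrange_basis (eq_bigl (fun j : 'I_n.+1 => nat_of_ord j != k)) //.
rewrite -(big_mkord (fun j => j != nat_of_ord k) (fun j => 1 - q ^+ j * q^-1 ^+ k)).
rewrite (big_cat_nat (leq0n k) (ltnW (ltn_ord k))) /= (@big_ltn_cond _ _ _ k n.+1) //= eqxx /=.
rewrite [X in X * _]big_rmcond_in => [|j]; last first.
  by rewrite mem_index_iota => /andP[_ /ltn_eqF->].
rewrite [X in _ * X]big_rmcond_in => [|j]; last first.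
  by rewrite mem_index_iota => /andP[lt_kj _]; rewrite gtn_eqF.
rewrite mulrA; congr (_ * _).
  rewrite big_mkord (prod_qpow_node (fun u => 1 - u)) // subnn big_ord0 mulr1.
  have := prod_sub_qVpow k (oner_neq0 F); rewrite divr1 => <-.
  by apply: eq_bigr => t _; rewrite mul1r.
rewrite -{1}(add0n k.+1) big_addn subSS big_mkord; apply: eq_bigr => i _.
by rewrite addnS exprS exprD -!mulrA exprVn mulfV ?expf_neq0 // mulr1.
Qed.

Lemma horner_qprod_node (z : F) k : z != 0 -> (k <= n)%N ->
  (\prod_(i < n) lfactor (z * q ^+ i)).[q^-1 ^+ k]
    = (- z) ^+ k * q^-1 ^+ 'C(k.+1, 2) * (qpoch (q / z) q k * qpoch z q (n - k)).
Proof.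
move=> nz_z le_kn; rewrite horner_prod.
under eq_bigr do rewrite horner_lfactor -mulrA.
by rewrite (prod_qpow_node (fun u => 1 - z * u)) // prod_sub_qVpow // mulrA.
Qed.

Lemma qlagrange_coef (z : F) (k : 'I_n.+1) : z != 0 ->
  qpoch q q n * lagrange_coef (fun j : 'I_n.+1 => q ^+ j) (fun l : 'I_n.+1 => q^-1 ^+ l)
                              (\prod_(i < n) lfactor (z * q ^+ i)) k
    = qbinom q n k * (qpoch (q / z) q k * qpoch z q (n - k)) * z ^+ k.
Proof.
move=> nz_z; have le_kn : (k <= n)%N by rewrite -ltnS.
rewrite /lagrange_coef horner_qprod_node // horner_qlagrange_basis_node /qbinom le_kn (exprNn z).
field; rewrite signr_eq0 !expf_neq0 ?invr_eq0 //.
by rewrite !qpoch_q_neq0 ?leq_subr.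
Qed.

Lemma qlagrange_coef_sign (z : F) (k : 'I_n.+1) :
  qpoch q q n * lagrange_coef (fun j : 'I_n.+1 => q ^+ j) (fun l : 'I_n.+1 => q^-1 ^+ l)
                              (\prod_(i < n) lfactor (z * q ^+ i)) k
    = (-1) ^+ k * q ^+ 'C(k.+1, 2) * qbinom q n k * qpoch (z * q^-1 ^+ k) q n.
Proof.
have le_kn : (k <= n)%N by rewrite -ltnS.
rewrite /lagrange_coef horner_qlagrange_basis_node /qbinom le_kn horner_prod.
under eq_bigr do rewrite horner_lfactor mulrAC.
rewrite -[\prod_i _]/(qpoch (z * q^-1 ^+ k) q n) [q^-1 ^+ 'C(_, _)]exprVn.
rewrite -[(-1) ^+ k / _ * _]mulrA invr_signM; field; rewrite !expf_neq0 //.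
by rewrite !qpoch_q_neq0 ?leq_subr.
Qed.

End QNodes.

Theorem corollary3p1 (F : fieldType) (q z : F) (n m : nat)
  (hmn : (m <= n)%N)
  (hq0 : q != 0) (hz0 : z != 0)
  (hq : forall j : nat, (0 < j <= n)%N -> q ^+ j != 1)
  (hzq : forall k : nat, (k < n)%N -> z * q ^ (k%:Z - m%:Z) != 1) :
  \sum_(0 <= k < n.+1 | k != m)
     qbinom q n k * (qpoch (q / z) q k * qpoch z q (n - k))
       / (1 - q ^ (k%:Z - m%:Z)) * z ^+ k
  = (-1) ^+ m * q ^+ 'C(m.+1, 2) * qbinom q n m * qpoch (z * q ^ (- m%:Z)) q n
    * (\sum_(0 <= k < n) (z * q ^ (k%:Z - m%:Z)) / (1 - z * q ^ (k%:Z - m%:Z))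
       - \sum_(0 <= k < n.+1 | k != m) q ^ (k%:Z - m%:Z) / (1 - q ^ (k%:Z - m%:Z))).
Proof.
have qVm : q ^ (- m%:Z) = q^-1 ^+ m by rewrite -exprnN exprVn.
have qpow_diff k : q ^ (k%:Z - m%:Z) = q ^+ k * q^-1 ^+ m by rewrite expfzDr // qVm.
pose m_ord : 'I_n.+1 := Ordinal (hmn : (m < n.+1)%N).
have nodes (j l : 'I_n.+1) : (q ^+ j * q^-1 ^+ l == 1) = (j == l).
  exact (qpow_mul_qVpow_eq1 hq0 hq (ltn_ord j) (ltn_ord l)).
have nz_factor (i : 'I_n) : 1 - z * q ^+ i * q^-1 ^+ m_ord != 0.
  by rewrite subr_eq0 eq_sym -mulrA -qpow_diff hzq.
pose c := lagrange_coef (fun j : 'I_n.+1 => q ^+ j) (fun l : 'I_n.+1 => q^-1 ^+ l)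
                       (\prod_(i < n) lfactor (z * q ^+ i)).
transitivity (qpoch q q n * \sum_(k | k != m_ord) c k / (1 - q ^+ k * q^-1 ^+ m_ord)).
  rewrite big_mkord mulr_sumr; apply: eq_big => // k _.
  by rewrite qpow_diff [RHS]mulrA qlagrange_coef //; ring.
rewrite (lagrange_partial_fraction nodes) ?card_ord // mulrA qlagrange_coef_sign // qVm.
congr (_ * (_ - _)); rewrite big_mkord.
  by apply: eq_bigr => i _; rewrite qpow_diff mulrA.
by apply: eq_big => // k _; rewrite qpow_diff.
Qed.
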